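(* If a sequence $G_n$ of finite random directed graphs converges in the local weak sense to the random rooted directed graph $(G,o)$, then the bipartite representations $G'_n$ converge in the local weak sense to $(G',o')$, where $G'$ is the bipartite representation of $G$ and the root $o'$ is $o^-$ or $o^+$ with probability $1/2$ each. The converse does not hold: the convergence of the sequence of bipartite representations $G'_n$ does not imply the convergence of $G_n$. In fact, there are different random directed rooted graphs $(G_1,o_1)$ and $(G_2,o_2)$, each of which is the local weak limit of a sequence of finite random graphs, such that their bipartite representations $(G'_1,o'_1)$ and $(G'_2,o'_2)$ (with roots chosen as $o_i^-$ or $o_i^+$ with probability $1/2$ each) are isomorphic as random rooted graphs.
   Context: Graphs are locally finite, possibly with multiple edges and loops. The bipartite representation of a directed graph $G=(V,E)$ is the bipartite undirected graph $G'=(V^-,V^+,E')$ with $V^-=\{v^-: v\in V\}$, $V^+=\{v^+: v\in V\}$ and $E'=\{\{v^-,w^+\}: (v,w)\in E\}$. A sequence $(G_n,o)$ of locally finite random rooted (directed) graphs converges in the local weak sense to the locally finite connected random rooted (directed) graph $(G,o)$ if for every positive integer $r$ and every finite rooted (directed) graph $(H,o)$ we have $\mathbb{P}(B_{G_n}(o,r)\simeq (H,o))\to \mathbb{P}(B_{G}(o,r)\simeq (H,o))$, where $B_G(x,r)$ is the ball of radius $r$ around $x$ in the graph metric and $\simeq$ denotes rooted isomorphism. For non-rooted finite graphs $G_n$, local weak convergence means convergence of $G_n$ with a root chosen uniformly at random among its vertices. *)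

From HB Require Import structures.
From mathcomp Require Import all_boot all_order all_algebra.
From mathcomp Require Import all_classical all_reals all_analysis.
Set Implicit Arguments. Unset Strict Implicit. Unset Printing Implicit Defensive.
Import Order.TTheory GRing.Theory Num.Theory.
Local Open Scope classical_set_scope.
Local Open Scope ring_scope.

(* A (multi)graph with vertex set a subset of nat.  [gE v w] is the number of
   edges from v to w (loops: gE v v).  A directed graph is any well-formed
   graph; an undirected multigraph is a well-formed graph with symmetric gE
   (gE v w = gE w v = number of edges {v,w}).  Every locally finite connected
   graph is countable, so vertex set in nat is no loss of generality; all
   notions below are invariant under isomorphism. *)
Record graph := Graph { gV : set nat ; gE : nat -> nat -> nat }.

Definition wf (G : graph) : Prop :=
  forall v w, gE G v w <> 0%N -> gV G v /\ gV G w.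

Definition symmetric (G : graph) : Prop := forall v w, gE G v w = gE G w v.

Definition directed_graph (G : graph) : Prop := wf G.
Definition undirected_graph (G : graph) : Prop := wf G /\ symmetric G.

Definition locally_finite (G : graph) : Prop :=
  forall v, gV G v -> finite_set [set w | gE G v w <> 0%N \/ gE G w v <> 0%N].

Definition finite_graph (G : graph) : Prop := finite_set (gV G).

(* adjacency in the underlying undirected graph (graph metric ignores directions) *)
Definition adj (G : graph) (u v : nat) : Prop :=
  gV G u /\ gV G v /\ (0 < gE G u v + gE G v u)%N.

Fixpoint reach (G : graph) (o : nat) (n : nat) (v : nat) : Prop :=
  match n with
  | 0 => v = o /\ gV G o
  | n.+1 => reach G o n v \/ exists u, reach G o n u /\ adj G u v
  end.

Definition connected (G : graph) (o : nat) : Prop :=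
  forall v, gV G v -> exists n, reach G o n v.

Definition ballV (G : graph) (o : nat) (r : nat) : set nat := [set v | reach G o r v].

Definition isom (A : set nat) (E1 : nat -> nat -> nat)
                (B : set nat) (E2 : nat -> nat -> nat) (f : nat -> nat) : Prop :=
  [/\ (forall v, A v -> B (f v)),
      (forall v w, A v -> A w -> f v = f w -> v = w),
      (forall y, B y -> exists v, A v /\ f v = y) &
      (forall v w, A v -> A w -> E2 (f v) (f w) = E1 v w)].

Definition giso (G F : graph) : Prop :=
  exists f, isom (gV G) (gE G) (gV F) (gE F) f.

Definition ball_iso (G : graph) (o r : nat) (H : graph) (h : nat) : Prop :=
  exists f, isom (ballV G o r) (gE G) (gV H) (gE H) f /\ f o = h.

Definition finite_rooted (cls : graph -> Prop) (H : graph) (h : nat) : Prop :=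
  [/\ cls H, finite_graph H & gV H h].

(* bipartite representation: v^- = 2v, v^+ = 2v+1, edge {v^-, w^+} for each
   edge (v, w) *)
Definition vminus (v : nat) : nat := v.*2.
Definition vplus (v : nat) : nat := v.*2.+1.

Definition bip (G : graph) : graph :=
  Graph [set x | gV G x./2]
    (fun x y => if ~~ odd x && odd y then gE G x./2 y./2
                else if odd x && ~~ odd y then gE G y./2 x./2 else 0%N).

Section Random.
Variable R : realType.

Definition cnt (A : set nat) : R := (\sum_(v \in A) (1 : R))%R.

(* fraction of vertices v of the finite graph G with B_G(v,r) ~= (H,h), i.e.
   P(B_G(o,r) ~= (H,h)) for a uniformly chosen root o *)
Definition frac (G : graph) (r : nat) (H : graph) (h : nat) : R :=
  cnt [set v | gV G v /\ ball_iso G v r H h] / cnt (gV G).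

Definition random_finite_graph (cls : graph -> Prop) d (Om : measurableType d)
    (G : Om -> graph) : Prop :=
  (forall w, [/\ cls (G w), finite_graph (G w) & gV (G w) !=set0]) /\
  (forall F, cls F -> finite_graph F -> measurable [set w | giso (G w) F]).

(* A random rooted locally finite connected graph (of class cls): a map into
   rooted graphs which is measurable for the local topology, i.e. all the
   events {B_G(o,r) ~= (H,h)} (which generate its Borel sigma-algebra) are
   measurable. *)
Definition random_rooted_graph (cls : graph -> Prop) d (Om : measurableType d)
    (G : Om -> graph) (o : Om -> nat) : Prop :=
  (forall w, [/\ cls (G w), locally_finite (G w), gV (G w) (o w)
                & connected (G w) (o w)]) /\
  (forall r H h, measurable [set w | ball_iso (G w) (o w) r H h]).

Definition fprob d (Om : measurableType d) (P : probability Om R)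
    (G : Om -> graph) (r : nat) (H : graph) (h : nat) : \bar R :=
  (\int[P]_(w in setT) (frac (G w) r H h)%:E)%E.

Definition rprob d (Om : measurableType d) (P : probability Om R)
    (G : Om -> graph) (o : Om -> nat) (r : nat) (H : graph) (h : nat) : \bar R :=
  P [set w | ball_iso (G w) (o w) r H h].

Definition lwc (cls : graph -> Prop) (pn : nat -> nat -> graph -> nat -> \bar R)
    (p : nat -> graph -> nat -> \bar R) : Prop :=
  forall r H h, finite_rooted cls H h ->
    (fun n => pn n r H h) @ \oo --> p r H h.

(* ball probabilities of the bipartite representation (G', o') of (G, o),
   with o' = o^- or o^+ with probability 1/2 each (independently of G) *)
Definition bprob d (Om : measurableType d) (P : probability Om R)
    (G : Om -> graph) (o : Om -> nat) (r : nat) (H : graph) (h : nat) : \bar R :=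
  ((2^-1)%:E * (rprob P (fun w => bip (G w)) (fun w => vminus (o w)) r H h
              + rprob P (fun w => bip (G w)) (fun w => vplus (o w)) r H h))%E.

End Random.

(* The r-ball of the bipartite representation G' around v^- or v^+ is determined
   by the r-ball of G around v.  So for a test graph (H, h), every ball type
   tau = (T, t) of G carries a weight c_tau in [0, 1], the fraction of the roots
   t^-, t^+ of T' with r-ball (H, h); the (H, h)-frequency in G'_n is then
   sum_tau c_tau * (tau-frequency in G_n), and the limit is
   sum_tau c_tau * P(B_G(o, r) ~= tau).  Finite rooted graphs are coded by
   integers, so these sums are series; their partial sums bound the
   (H, h)-frequency from below and, with weights 1 - c_tau, its complement, and
   since the type probabilities of the limit sum to 1, termwise convergence
   forces convergence of the frequency.
   For the converse, the bipartite representations of the loop on one vertex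
   and of the directed 2-cycle are disjoint unions of single edges, while their
   radius-0 balls differ: alternating the two graphs gives a divergent sequence
   whose bipartite representations converge. *)

From Pilot Require Import Defs.
From HB Require Import structures.
From mathcomp Require Import all_boot all_order all_algebra.
From mathcomp Require Import all_classical all_reals all_analysis.
From mathcomp Require Import zify ring lra.
Set Implicit Arguments. Unset Strict Implicit. Unset Printing Implicit Defensive.
Import Order.TTheory GRing.Theory Num.Theory.
Import numFieldNormedType.Exports.
Local Open Scope classical_set_scope.

(** * Balls and their isomorphisms *)

Lemma reach_gV G o j x : reach G o j x -> gV G x.
Proof.
elim: j x => [|j IH] x /=; first by case=> ->.
by case=> [/IH//|[u [_ [_ [? _]]]]].
Qed.

Lemma reach_le G o j k x : (j <= k)%N -> reach G o j x -> reach G o k x.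
Proof.
move=> + Hx; elim: k => [|k IH]; first by rewrite leqn0 => /eqP <-.
by rewrite leq_eqVlt => /orP[/eqP <- //|]; rewrite ltnS => /IH; left.
Qed.

Lemma reach_root G o j : gV G o -> reach G o j o.
Proof. by move=> Vo; apply: (@reach_le _ _ 0). Qed.

Lemma reach_closed G (A : set nat) o j x : A o ->
  (forall a b, A a -> adj G a b -> A b) -> reach G o j x -> A x.
Proof.
move=> Ao closedA; elim: j x => [|j IH] x /=; first by case=> ->.
by case=> [/IH//|[u [/IH Au Gux]]]; apply: closedA Gux.
Qed.

Lemma ballV_finite G o r : locally_finite G -> finite_set (ballV G o r).
Proof.
move=> lfG; elim: r => [|r IH].
  by apply: (sub_finite_set (B := [set o])) (finite_set1 o) => x [->].
apply: (sub_finite_set (B := ballV G o r `|` \bigcup_(u in ballV G o r)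
    [set w | gE G u w <> 0 \/ gE G w u <> 0])).
  move=> x [Bx|[u [Bu [_ [_ Eux]]]]]; first by left.
  by right; exists u => //=; lia.
rewrite finite_setU; split => //; apply: bigcup_finite => // u Bu.
exact/lfG/(reach_gV Bu).
Qed.

Lemma isom_comp A E1 B E2 C E3 f g :
  isom A E1 B E2 f -> isom B E2 C E3 g -> isom A E1 C E3 (g \o f).
Proof.
case=> f1 f2 f3 f4 [g1 g2 g3 g4]; split => /=.
- by move=> v /f1/g1.
- by move=> v w Av Aw /(g2 _ _ (f1 _ Av) (f1 _ Aw)) /f2; apply.
- move=> y /g3 [z [Bz <-]]; have [v [Av <-]] := f3 _ Bz; by exists v.
- by move=> v w Av Aw; rewrite g4 ?f4 //; apply: f1.
Qed.

Lemma isom_inv A E1 B E2 f : isom A E1 B E2 f ->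
  exists g, [/\ isom B E2 A E1 g, (forall v, A v -> g (f v) = v)
                & (forall y, B y -> f (g y) = y)].
Proof.
case=> f1 f2 f3 f4.
have /choice[g gP] : forall y, exists v, B y -> A v /\ f v = y.
  move=> y; case: (pselect (B y)) => By; last by exists 0.
  by have [v fv] := f3 _ By; exists v.
have fK : forall v, A v -> g (f v) = v.
  by move=> v Av; have [Agv /f2] := gP (f v) (f1 _ Av); apply.
exists g; split => //; last by move=> y /gP[].
split.
- by move=> y /gP[].
- by move=> y z By Bz gyz; rewrite -(proj2 (gP y By)) -(proj2 (gP z Bz)) gyz.
- by move=> v Av; exists (f v); split; [apply: f1 | apply: fK].
- by move=> y z /gP[Ay <-] /gP[Az <-]; rewrite !fK ?f4.
Qed.

Section LocalIsom.
Variables (G1 G2 : graph) (A : set nat) (f : nat -> nat) (o r : nat).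
Hypotheses (Ao : A o) (AV1 : A `<=` gV G1) (AV2 : forall a, A a -> gV G2 (f a))
  (f_inj : forall a b, A a -> A b -> f a = f b -> a = b)
  (fE : forall a b, A a -> A b -> gE G2 (f a) (f b) = gE G1 a b)
  (ball_sub : ballV G1 o r `<=` A)
  (ball_img : forall y, reach G2 (f o) r y -> exists2 x, A x & f x = y).

Lemma isom_adj a b : A a -> A b -> adj G1 a b <-> adj G2 (f a) (f b).
Proof.
move=> Aa Ab; rewrite /adj !fE //.
by split=> -[_ [_ Eab]]; do !split => //; [apply: AV2 | apply: AV2 | apply: AV1 | apply: AV1].
Qed.

Lemma isom_reach j : (j <= r)%N ->
  forall x, A x -> reach G1 o j x <-> reach G2 (f o) j (f x).
Proof.
elim: j => [|j IH] jr x Ax /=.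
  split; first by case=> -> _; split => //; apply: AV2.
  by case=> /(f_inj Ax Ao) -> _; split => //; apply: AV1.
have lejr : (j <= r)%N by apply: ltnW.
split.
  case=> [/(IH lejr _ Ax) ?|[u [Ru Gux]]]; first by left.
  have Au : A u by apply/ball_sub/(reach_le lejr Ru).
  by right; exists (f u); split; [apply/(IH lejr) | apply/isom_adj].
case=> [/(IH lejr _ Ax) ?|[u' [Ru' Gux]]]; first by left.
have [u Au fu] := ball_img (reach_le lejr Ru'); subst u'.
by right; exists u; split; [apply/(IH lejr) | apply/(isom_adj Au Ax)].
Qed.

Lemma isom_ballV : isom (ballV G1 o r) (gE G1) (ballV G2 (f o) r) (gE G2) f.
Proof.
split.
- by move=> v Bv; apply/(isom_reach (leqnn r) (ball_sub Bv)).
- by move=> v w /ball_sub Av /ball_sub Aw; apply: f_inj.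
- move=> y By; have [x Ax fx] := ball_img By; exists x; split => //.
  by apply/(isom_reach (leqnn r) Ax); rewrite fx.
- by move=> v w /ball_sub Av /ball_sub Aw; apply: fE.
Qed.

End LocalIsom.

Lemma ball_iso_congr G1 G2 o1 o2 r f : gV G1 o1 ->
  isom (ballV G1 o1 r) (gE G1) (ballV G2 o2 r) (gE G2) f -> f o1 = o2 ->
  forall H h, ball_iso G1 o1 r H h <-> ball_iso G2 o2 r H h.
Proof.
move=> Vo1 iso_f fo H h; split.
  case=> g [iso_g go]; have [f' [iso_f' f'K _]] := isom_inv iso_f.
  exists (g \o f'); split; first exact: isom_comp iso_f' iso_g.
  by rewrite /= -fo f'K //; apply: reach_root.
case=> g [iso_g go]; exists (g \o f); split; first exact: isom_comp iso_f iso_g.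
by rewrite /= fo.
Qed.

Lemma isom_ball_iso F F' f v r H h : isom (gV F) (gE F) (gV F') (gE F') f ->
  gV F v -> ball_iso F v r H h <-> ball_iso F' (f v) r H h.
Proof.
move=> iso_f Vv; have [f1 f2 f3 f4] := iso_f.
apply: ball_iso_congr => //; apply: (isom_ballV (A := gV F)) => //.
- by move=> x /reach_gV.
- by move=> y /reach_gV /f3 [x [Vx fx]]; exists x.
Qed.

Definition rooted_iso (T : graph) t (T' : graph) t' :=
  exists g, isom (gV T) (gE T) (gV T') (gE T') g /\ g t = t'.

Lemma ball_iso_rooted_iso G v r T t T' t' : gV G v ->
  ball_iso G v r T t -> ball_iso G v r T' t' -> rooted_iso T t T' t'.
Proof.
move=> Vv [f [iso_f ft]] [g [iso_g gt]].
have [f' [iso_f' f'K _]] := isom_inv iso_f.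
exists (g \o f'); split; first exact: isom_comp iso_f' iso_g.
by rewrite /= -ft f'K //; apply: reach_root.
Qed.

Lemma ball_iso_trans G v r T t T' t' :
  ball_iso G v r T t -> rooted_iso T t T' t' -> ball_iso G v r T' t'.
Proof.
move=> [f [iso_f ft]] [g [iso_g gt]]; exists (g \o f).
by split; [apply: isom_comp iso_f iso_g | rewrite /= ft].
Qed.

Lemma rooted_iso_sym T t T' t' : gV T t -> rooted_iso T t T' t' -> rooted_iso T' t' T t.
Proof.
move=> Vt [g [iso_g gt]]; have [g' [iso_g' g'K _]] := isom_inv iso_g.
by exists g'; split => //; rewrite -gt g'K.
Qed.

(** * The bipartite representation *)

Lemma wf_bip G : wf G -> wf (bip G).
Proof. by move=> wfG x y /=; case: (odd x); case: (odd y) => //= /wfG[]. Qed.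

Lemma symmetric_bip G : Defs.symmetric (bip G).
Proof. by move=> x y /=; case: (odd x); case: (odd y). Qed.

Definition bipmap (f : nat -> nat) (x : nat) : nat := (odd x + (f x./2).*2)%N.

Lemma bipmap_half f x : (bipmap f x)./2 = f x./2.
Proof. exact: half_bit_double. Qed.

Lemma bipmap_odd f x : odd (bipmap f x) = odd x.
Proof. by rewrite /bipmap oddD odd_double oddb addbF. Qed.

Lemma bip_isom A B G T f : isom A (gE G) B (gE T) f ->
  isom [set x | A x./2] (gE (bip G)) [set y | B y./2] (gE (bip T)) (bipmap f).
Proof.
case=> f1 f2 f3 f4; split => /=.
- by move=> x Ax; rewrite bipmap_half; apply: f1.
- move=> x y Ax Ay fxy.
  have hxy : x./2 = y./2 by apply: f2 => //; rewrite -!bipmap_half fxy.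
  have oxy : odd x = odd y by rewrite -(bipmap_odd f x) fxy bipmap_odd.
  by rewrite -(odd_double_half x) -(odd_double_half y) hxy oxy.
- move=> y By; have [v [Av fv]] := f3 _ By; exists (odd y + v.*2)%N.
  rewrite /= /bipmap half_bit_double oddD odd_double oddb addbF fv odd_double_half.
  by split.
- move=> x y Ax Ay; rewrite /= !bipmap_odd !bipmap_half.
  by case: (odd x); case: (odd y); rewrite //= f4.
Qed.

Lemma giso_bip G G' : giso G G' -> giso (bip G) (bip G').
Proof. by case=> f iso_f; exists (bipmap f); apply: bip_isom. Qed.

Lemma adj_bip G x y : adj (bip G) x y -> adj G x./2 y./2.
Proof.
case=> Vx [Vy Exy]; do !split => //; move: Exy => /=.
by case: (odd x); case: (odd y) => /=; lia.
Qed.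

Lemma reach_bip G o j x : reach (bip G) o j x -> reach G o./2 j x./2.
Proof.
elim: j x => [|j IH] x /=; first by case=> ->.
by case=> [/IH|[u [/IH Ru /adj_bip Gux]]]; [left | right; exists u./2].
Qed.

(* x |-> x./2 maps paths of bip G to paths of G.  Note that b + v.*2 is
   vminus v for b = false and vplus v for b = true, by conversion. *)
Lemma bip_ball_iso G v r T t (b : bool) : gV G v -> ball_iso G v r T t ->
  forall H h, ball_iso (bip G) (b + v.*2) r H h <-> ball_iso (bip T) (b + t.*2) r H h.
Proof.
move=> Vv [f [iso_f ft]]; have [f1 f2 f3 f4] := bip_isom iso_f.
have fv : bipmap f (b + v.*2) = (b + t.*2)%N.
  by rewrite /bipmap half_bit_double ft oddD odd_double oddb addbF.
apply: (@ball_iso_congr _ _ _ _ r (bipmap f)); last exact: fv.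
  by rewrite /= half_bit_double.
rewrite -fv; apply: (isom_ballV (A := [set x | ballV G v r x./2])) => //.
- by rewrite /= half_bit_double; apply: reach_root.
- by move=> a /reach_gV.
- by move=> x /reach_bip; rewrite half_bit_double.
- by move=> y /reach_gV /f3 [x [Ax fx]]; exists x.
Qed.

(** * Coding finite rooted graphs by integers *)

Definition matrix_graph (m : nat) (s : seq nat) : graph :=
  Graph [set i | i < m]
    (fun i j => if (i < m) && (j < m) then nth 0 s (i * m + j) else 0).

(* Decoding nat into rooted adjacency matrices (size, row-major entries, root);
   invalid codes decode to a single isolated vertex. *)
Definition code (k : nat) : (nat * seq nat) * nat :=
  if unpickle k is Some c then if c.2 < c.1.1 then c else ((1, [:: 0]), 0)
  else ((1, [:: 0]), 0).

Definition code_graph k := matrix_graph (code k).1.1 (code k).1.2.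
Definition code_root k := (code k).2.

Lemma code_root_lt k : code_root k < (code k).1.1.
Proof. by rewrite /code_root /code; case: (unpickle k) => [c|] //; case: ifP. Qed.

Lemma finite_set_lt m : finite_set [set i | i < m].
Proof. by apply/finite_seqP; exists (iota 0 m); apply/seteqP; split => x /=; rewrite mem_iota. Qed.

Lemma code_graph_rooted k : finite_rooted directed_graph (code_graph k) (code_root k).
Proof.
split; [|exact: finite_set_lt|exact: code_root_lt].
by move=> v w /=; case: ifP => // /andP[].
Qed.

Lemma code_surj (A : set nat) (E : nat -> nat -> nat) o : finite_set A -> A o ->
  exists k f, isom A E (gV (code_graph k)) (gE (code_graph k)) f /\ f o = code_root k.
Proof.
case/finite_seqP => s0 ->{A} Ao; set s := undup s0.
have ms x : (x \in s) = (x \in s0) by rewrite mem_undup.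
have us : uniq s by apply: undup_uniq.
set m := size s.
set E_s := [seq E (nth 0 s (i %/ m)) (nth 0 s (i %% m)) | i <- iota 0 (m * m)].
set c := ((m, E_s), index o s).
have om : index o s < m by rewrite index_mem ms.
have ck : code (pickle c) = c by rewrite /code pickleK /= om.
exists (pickle c), (index^~ s); rewrite /code_graph /code_root ck /=.
split => //; split => /=.
- by move=> v Av; rewrite index_mem ms.
- move=> v w Av Aw e.
  by rewrite -(nth_index 0 (_ : v \in s)) ?ms // e nth_index // ms.
- move=> y ym; exists (nth 0 s y); split; last by rewrite index_uniq.
  by rewrite -ms mem_nth.
- move=> v w Av Aw.
  have vm : index v s < m by rewrite index_mem ms.
  have wm : index w s < m by rewrite index_mem ms.
  have lt : index v s * m + index w s < m * m by nia.
  rewrite vm wm /= (nth_map 0) ?size_iota // nth_iota // add0n.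
  rewrite divnMDl ?divn_small ?addn0 ?modnMDl ?modn_small //; last by lia.
  by rewrite !nth_index ?ms.
Qed.

Definition canonical_code k :=
  forall j, j < k -> ~ rooted_iso (code_graph j) (code_root j) (code_graph k) (code_root k).

Lemma canonical_ball_uniq G v r k k' : gV G v -> canonical_code k -> canonical_code k' ->
  ball_iso G v r (code_graph k) (code_root k) ->
  ball_iso G v r (code_graph k') (code_root k') -> k = k'.
Proof.
move=> Vv ck ck' Bk Bk'; case: (ltngtP k k') => // lt_kk'.
  by case: (ck' _ lt_kk'); apply: ball_iso_rooted_iso Bk Bk'.
by case: (ck _ lt_kk'); apply: ball_iso_rooted_iso Bk' Bk.
Qed.

Lemma canonical_ball_exists G v r : gV G v -> finite_set (ballV G v r) ->
  exists k, canonical_code k /\ ball_iso G v r (code_graph k) (code_root k).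
Proof.
move=> Vv finB; have [k0 [f [iso_f fv]]] := code_surj (gE G) finB (reach_root r Vv).
have : ball_iso G v r (code_graph k0) (code_root k0) by exists f.
elim/ltn_ind: k0 {f iso_f fv} => k IH Bk.
case: (pselect (canonical_code k)) => [ck|/existsNP[j]]; first by exists k.
move=> /not_implyP[lt_jk /contrapT iso_jk]; apply: (IH j lt_jk).
by apply: ball_iso_trans Bk _; apply: rooted_iso_sym iso_jk; apply: code_root_lt.
Qed.

(** * The loop and the directed 2-cycle *)

Definition loop_graph : graph :=
  Graph [set x | x \in [:: 0]] (fun i j => if (i == 0) && (j == 0) then 1 else 0).

Definition digon : graph := Graph [set x | x \in [:: 0; 1]]
  (fun i j => if ((i == 0) && (j == 1)) || ((i == 1) && (j == 0)) then 1 else 0).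

Lemma directed_loop_graph : directed_graph loop_graph.
Proof. by move=> v w /=; case: ifP => // /andP[/eqP -> /eqP ->]. Qed.

Lemma directed_digon : directed_graph digon.
Proof. by move=> v w /=; case: ifP => // /orP[] /andP[/eqP -> /eqP ->]. Qed.

Lemma finite_loop_graph : finite_graph loop_graph. Proof. exact: finite_seq. Qed.
Lemma finite_digon : finite_graph digon. Proof. exact: finite_seq. Qed.

Lemma locally_finite_finite F : wf F -> finite_graph F -> locally_finite F.
Proof. by move=> wfF finF v _; apply: sub_finite_set finF => x /= [] /wfF []. Qed.

Lemma connected_loop_graph : Defs.connected loop_graph 0.
Proof. by move=> v; rewrite /= inE => /eqP ->; exists 0. Qed.

Lemma connected_digon : Defs.connected digon 0.
Proof.
move=> v; rewrite /= !inE => /orP[] /eqP ->; first by exists 0.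
by exists 1; right; exists 0.
Qed.

Lemma gV_bip_loop_graph y : gV (bip loop_graph) y -> y < 2.
Proof. by rewrite /= inE => /eqP y2; lia. Qed.

Lemma gV_bip_digon y : gV (bip digon) y -> y < 4.
Proof. by rewrite /= !inE => /orP[] /eqP y2; lia. Qed.

Lemma connected_bip_loop_graph : Defs.connected (bip loop_graph) 0.
Proof.
move=> v /gV_bip_loop_graph; case: v => [|[|v]] // _; first by exists 0.
by exists 1; right; exists 0.
Qed.

Lemma edge_component_ball_iso F a b r H h : a != b -> gV F a -> gV F b ->
  (forall x y, (x == a) || (x == b) -> adj F x y -> (y == a) || (y == b)) ->
  gE F a a = 0 -> gE F b b = 0 -> gE F a b = 1 -> gE F b a = 1 ->
  (ball_iso F a r H h <-> ball_iso (bip loop_graph) 0 r H h) /\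
  (ball_iso F b r H h <-> ball_iso (bip loop_graph) 1 r H h).
Proof.
move=> neq_ab Va Vb closed_ab Eaa Ebb Eab Eba.
pose f x := if x == a then 0 else 1.
have fa : f a = 0 by rewrite /f eqxx.
have fb : f b = 1 by rewrite /f eq_sym (negbTE neq_ab).
have iso_f v : (v == a) || (v == b) ->
    isom (ballV F v r) (gE F) (ballV (bip loop_graph) (f v) r) (gE (bip loop_graph)) f.
  move=> ab_v; apply: (isom_ballV (A := [set x | (x == a) || (x == b)])) => //.
  - by move=> x /= /orP[] /eqP ->.
  - by move=> x /= /orP[] /eqP ->; rewrite ?fa ?fb.
  - by move=> x y /= /orP[] /eqP -> /orP[] /eqP -> //; rewrite fa fb.
  - by move=> x y /= /orP[] /eqP -> /orP[] /eqP ->; rewrite ?fa ?fb.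
  - by move=> x; apply: reach_closed.
  - move=> y /reach_gV /gV_bip_loop_graph; case: y => [|[|y]] // _.
      by exists a; rewrite /= ?eqxx.
    by exists b; rewrite /= ?eqxx ?orbT.
have := iso_f a; rewrite fa eqxx => /(_ isT) iso_a.
have := iso_f b; rewrite fb eqxx orbT => /(_ isT) iso_b.
by split; [apply: (ball_iso_congr Va iso_a fa) | apply: (ball_iso_congr Vb iso_b fb)].
Qed.

Lemma bip_loop_graph_ball_iso10 r H h :
  ball_iso (bip loop_graph) 1 r H h <-> ball_iso (bip loop_graph) 0 r H h.
Proof.
have closed10 x y : (x == 1) || (x == 0) -> adj (bip loop_graph) x y -> (y == 1) || (y == 0).
  by move=> _ [_ [/gV_bip_loop_graph Vy _]]; case: y Vy => [|[|y]].
by apply: (proj1 (@edge_component_ball_iso (bip loop_graph) 1 0 r H h _ _ _ closed10 _ _ _ _)).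
Qed.

Lemma bip_digon_ball_iso03 r H h :
  (ball_iso (bip digon) 0 r H h <-> ball_iso (bip loop_graph) 0 r H h) /\
  (ball_iso (bip digon) 3 r H h <-> ball_iso (bip loop_graph) 1 r H h).
Proof.
apply: (@edge_component_ball_iso _ 0 3) => // x y /orP[] /eqP -> [_ [/gV_bip_digon Vy]];
  by case: y Vy => [|[|[|[|y]]]].
Qed.

Lemma bip_digon_ball_iso21 r H h :
  (ball_iso (bip digon) 2 r H h <-> ball_iso (bip loop_graph) 0 r H h) /\
  (ball_iso (bip digon) 1 r H h <-> ball_iso (bip loop_graph) 1 r H h).
Proof.
apply: (@edge_component_ball_iso _ 2 1) => // x y /orP[] /eqP -> [_ [/gV_bip_digon Vy]];
  by case: y Vy => [|[|[|[|y]]]].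
Qed.

Lemma digon_ball_iso10 r H h : ball_iso digon 1 r H h <-> ball_iso digon 0 r H h.
Proof.
pose swap x := if x == 0 then 1 else 0.
have iso_swap : isom (gV digon) (gE digon) (gV digon) (gE digon) swap.
  split.
  - by move=> v; rewrite /= !inE => /orP[] /eqP ->.
  - by move=> v w; rewrite /= !inE => /orP[] /eqP -> /orP[] /eqP ->.
  - by move=> y; rewrite /= !inE => /orP[] /eqP ->; [exists 1 | exists 0].
  - by move=> v w; rewrite /= !inE => /orP[] /eqP -> /orP[] /eqP ->.
by have [? ?] := isom_ball_iso r H h iso_swap (isT : gV digon 0); split.
Qed.

Lemma loop_graph_ball0 : ball_iso loop_graph 0 0 loop_graph 0.
Proof.
exists id; split => //; split => //=.
- by move=> v [->].
- by move=> y; rewrite inE => /eqP ->; exists 0.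
Qed.

Lemma digon_not_ball0 : ~ ball_iso digon 0 0 loop_graph 0.
Proof.
case=> f [[_ _ _ fE] f0]; have B0 : ballV digon 0 0 0 by [].
by have := fE _ _ B0 B0; rewrite f0.
Qed.

Local Open Scope ring_scope.

(** * Frequencies of ball types *)

Section Counting.
Variable R : realType.

Definition ind (P : Prop) : R := (`[< P >] : bool)%:R.

Lemma ind_iff P Q : (P <-> Q) -> ind P = ind Q.
Proof. by move=> /propext ->. Qed.

Lemma indT (P : Prop) : P -> ind P = 1.
Proof. by move=> p; rewrite /ind asboolT. Qed.

Lemma indF (P : Prop) : ~ P -> ind P = 0.
Proof. by move=> np; rewrite /ind asboolF. Qed.

Lemma ind_and P Q : ind (P /\ Q) = ind P * ind Q.
Proof.
case: (pselect P) => [p|np]; last by rewrite (indF np) mul0r indF // => -[].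
case: (pselect Q) => [q|nq]; first by rewrite !indT ?mulr1.
by rewrite (indF nq) mulr0 indF // => -[].
Qed.

Lemma ind01 P : 0 <= ind P <= 1.
Proof. by rewrite /ind; case: asboolP => _ /=; rewrite ?mulr0n ?mulr1n ?lexx ?ler01. Qed.

Lemma finite_uniq_enum (V : set nat) : finite_set V ->
  exists s, uniq s /\ forall v, V v <-> v \in s.
Proof.
case/finite_seqP => s ->; exists (undup s).
by split => [|v]; [apply: undup_uniq | rewrite mem_undup].
Qed.

Lemma frac_seq G r H h s : uniq s -> (forall v, gV G v <-> v \in s) ->
  Defs.frac R G r H h = (\sum_(v <- s) ind (ball_iso G v r H h)) / (size s)%:R.
Proof.
move=> us Gs; rewrite /Defs.frac /cnt.
have -> : gV G = [set` s] by apply/seteqP; split => x /Gs.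
have -> : [set v | [set` s] v /\ ball_iso G v r H h] =
    [set` [seq v <- s | `[< ball_iso G v r H h >]]].
  apply/seteqP; split => x /=; rewrite mem_filter; first by case=> -> /asboolP ->.
  by case/andP => /asboolP.
rewrite -!fsbig_seq ?filter_uniq // big_filter big_mkcond -sum1_size natr_sum.
by congr (_ / _); apply: eq_bigr => v _; rewrite /ind; case: asboolP.
Qed.

Lemma frac01 G r H h : finite_set (gV G) -> 0 <= Defs.frac R G r H h <= 1.
Proof.
case/finite_uniq_enum => s [us Gs]; rewrite (frac_seq _ _ _ us Gs).
have sum_ge0 : 0 <= \sum_(v <- s) ind (ball_iso G v r H h).
  by apply: sumr_ge0 => v _; case/andP: (ind01 (ball_iso G v r H h)).
have sum_le : \sum_(v <- s) ind (ball_iso G v r H h) <= (size s)%:R.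
  by rewrite -sum1_size natr_sum; apply: ler_sum => v _; case/andP: (ind01 (ball_iso G v r H h)).
case: (size s) sum_le => [|n] sum_le; first by rewrite invr0 mulr0 lexx ler01.
by rewrite divr_ge0 //= ler_pdivrMr ?ltr0Sn // mul1r.
Qed.

Lemma frac_giso G G' r H h : finite_set (gV G) -> giso G G' ->
  Defs.frac R G r H h = Defs.frac R G' r H h.
Proof.
move=> /finite_uniq_enum [s [us Gs]] [f iso_f]; have [f1 f2 f3 f4] := iso_f.
have us' : uniq (map f s).
  by rewrite map_inj_in_uniq // => x y /Gs Vx /Gs Vy; apply: f2.
have Gs' y : gV G' y <-> y \in map f s.
  split; first by case/f3 => v [/Gs Vv <-]; apply: map_f.
  by case/mapP => v /Gs Vv ->; apply: f1.
rewrite (frac_seq _ _ _ us Gs) (frac_seq _ _ _ us' Gs') size_map big_map.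
congr (_ / _); apply: eq_big_seq => v /Gs Vv.
exact/ind_iff/isom_ball_iso.
Qed.

Definition bip_seq (s : seq nat) := flatten [seq [:: vminus v; vplus v] | v <- s].

Lemma mem_bip_seq s x : (x \in bip_seq s) = (x./2 \in s).
Proof.
elim: s => //= a s IH; rewrite /bip_seq /= -/(bip_seq s) !inE IH orbA.
by congr (_ || _); apply/idP/idP; rewrite /vminus /vplus; lia.
Qed.

Lemma bip_seq_uniq s : uniq s -> uniq (bip_seq s).
Proof.
elim: s => //= a s IH /andP[a_s us].
rewrite /bip_seq /= -/(bip_seq s) !inE !mem_bip_seq IH // /vminus /vplus.
have [-> ->] : (a.*2)./2 = a /\ (a.*2.+1)./2 = a by split; lia.
by rewrite (negbTE a_s) !andbT orbF; apply/negP; lia.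
Qed.

Lemma size_bip_seq s : size (bip_seq s) = (2 * size s)%N.
Proof. by elim: s => //= a s IH; rewrite /bip_seq /= -/(bip_seq s) IH; lia. Qed.

Lemma big_bip_seq s (F : nat -> R) :
  \sum_(x <- bip_seq s) F x = \sum_(v <- s) (F (vminus v) + F (vplus v)).
Proof.
by elim: s => [|a s IH]; rewrite ?big_nil // /bip_seq /= -/(bip_seq s) !big_cons IH addrA.
Qed.

Lemma gV_bip_seq G s : (forall v, gV G v <-> v \in s) ->
  forall x, gV (bip G) x <-> x \in bip_seq s.
Proof. by move=> Gs x; rewrite mem_bip_seq -Gs. Qed.

Lemma finite_bip G : finite_set (gV G) -> finite_set (gV (bip G)).
Proof.
case/finite_uniq_enum => s [us Gs]; apply/finite_seqP; exists (bip_seq s).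
by apply/seteqP; split => x /= /(gV_bip_seq Gs).
Qed.

End Counting.

Lemma sum_ind_unique_le (R : realType) (P : nat -> Prop) (y : nat -> R) B K :
  0 <= B -> (forall k k', P k -> P k' -> k = k') -> (forall k, P k -> y k <= B) ->
  \sum_(0 <= k < K) ind R (P k) * y k <= B.
Proof.
move=> B0 P_uniq yB; elim: K => [|K IH]; first by rewrite big_geq.
rewrite big_nat_recr //=; case: (pselect (P K)) => [PK|nPK]; last first.
  by rewrite indF // mul0r addr0.
rewrite big_nat_cond big1 ?add0r; first by rewrite indT // mul1r yB.
move=> k /andP[/andP[_ ltkK] _]; rewrite indF ?mul0r // => Pk.
by move: ltkK; rewrite (P_uniq _ _ Pk PK) ltnn.
Qed.

Section BallTypes.
Variables (R : realType) (r : nat) (H : graph) (h : nat).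

Definition bip_root_avg G v : R :=
  (ind R (ball_iso (bip G) (vminus v) r H h) + ind R (ball_iso (bip G) (vplus v) r H h)) / 2.

Lemma bip_root_avg01 G v : 0 <= bip_root_avg G v <= 1.
Proof.
rewrite /bip_root_avg; move: (ind01 R (ball_iso (bip G) (vminus v) r H h)).
by move: (ind01 R (ball_iso (bip G) (vplus v) r H h)) => /andP[? ?] /andP[? ?]; lra.
Qed.

Lemma bip_root_avg_ball G v T t : gV G v -> ball_iso G v r T t ->
  bip_root_avg G v = bip_root_avg T t.
Proof.
move=> Vv Bv; rewrite /bip_root_avg.
by rewrite (ind_iff _ (bip_ball_iso false Vv Bv H h)) (ind_iff _ (bip_ball_iso true Vv Bv H h)).
Qed.

Lemma frac_bip G s : uniq s -> (forall v, gV G v <-> v \in s) ->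
  Defs.frac R (bip G) r H h = (size s)%:R^-1 * \sum_(v <- s) bip_root_avg G v.
Proof.
move=> us Gs; rewrite (frac_seq _ _ _ _ (bip_seq_uniq us) (gV_bip_seq Gs)).
by rewrite big_bip_seq size_bip_seq natrM invfM -mulr_suml; lra.
Qed.

Definition code_avg k := bip_root_avg (code_graph k) (code_root k).
Definition hit_coef k := ind R (canonical_code k) * code_avg k.
Definition miss_coef k := ind R (canonical_code k) * (1 - code_avg k).
Definition type_frac G k := Defs.frac R G r (code_graph k) (code_root k).

Lemma sum_canonical_ball_le (F : R -> R) G v K : gV G v -> 0 <= F (bip_root_avg G v) ->
  \sum_(0 <= k < K) ind R (canonical_code k) * F (code_avg k) *
                    ind R (ball_iso G v r (code_graph k) (code_root k))
  <= F (bip_root_avg G v).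
Proof.
move=> Vv F_ge0.
under eq_bigr => k _ do rewrite mulrAC -ind_and.
apply: sum_ind_unique_le => // [k k' [ck Bk] [ck' Bk']|k [_ Bk]].
  exact: canonical_ball_uniq Vv ck ck' Bk Bk'.
by rewrite /code_avg -(bip_root_avg_ball Vv Bk).
Qed.

Lemma sum_type_frac G s (y : nat -> R) K : uniq s -> (forall v, gV G v <-> v \in s) ->
  \sum_(0 <= k < K) y k * type_frac G k = (size s)%:R^-1 *
    \sum_(v <- s) \sum_(0 <= k < K) y k * ind R (ball_iso G v r (code_graph k) (code_root k)).
Proof.
move=> us Gs; rewrite exchange_big mulr_sumr; apply: eq_bigr => k _.
rewrite /type_frac (frac_seq _ _ _ _ us Gs) mulr_sumr mulr_suml mulr_sumr.
by apply: eq_bigr => v _; ring.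
Qed.

Lemma sum_hit_coef_le G K : finite_set (gV G) ->
  \sum_(0 <= k < K) hit_coef k * type_frac G k <= Defs.frac R (bip G) r H h.
Proof.
case/finite_uniq_enum => s [us Gs]; rewrite (sum_type_frac _ _ us Gs) (frac_bip us Gs).
rewrite ler_wpM2l ?invr_ge0 ?ler0n // !big_seq ler_sum // => v /Gs Vv.
by apply: (sum_canonical_ball_le (F := id)) => //; case/andP: (bip_root_avg01 G v).
Qed.

Lemma sum_miss_coef_le G K : finite_set (gV G) ->
  \sum_(0 <= k < K) miss_coef k * type_frac G k <= 1 - Defs.frac R (bip G) r H h.
Proof.
case/finite_uniq_enum => s [us Gs]; rewrite (sum_type_frac _ _ us Gs) (frac_bip us Gs).
case: s us Gs => [|a s] us Gs; first by rewrite !big_nil !mulr0 subr0 ler01.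
have -> : 1 - (size (a :: s))%:R^-1 * \sum_(v <- a :: s) bip_root_avg G v =
    (size (a :: s))%:R^-1 * \sum_(v <- a :: s) (1 - bip_root_avg G v).
  by rewrite sumrB mulrBr -sum1_size natr_sum mulVf // -natr_sum sum1_size pnatr_eq0.
rewrite ler_wpM2l ?invr_ge0 ?ler0n // !big_seq ler_sum // => v /Gs Vv.
apply: (sum_canonical_ball_le (F := fun x => 1 - x)) => //.
by case/andP: (bip_root_avg01 G v) => _; rewrite subr_ge0.
Qed.

End BallTypes.

(** * Convergence of the bipartite representations *)

Lemma cvg_sum_coef (R : realType) (x : nat -> nat -> R) (p y : nat -> R) K :
  (forall k, (fun n => x n k) @ \oo --> p k) ->
  (fun n => \sum_(0 <= k < K) y k * x n k) @ \oo --> \sum_(0 <= k < K) y k * p k.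
Proof.
move=> x_cvg; elim: K => [|K IH].
  by under eq_fun do rewrite big_geq //; rewrite big_geq //; apply: cvg_cst.
under eq_fun do rewrite big_nat_recr //=.
by rewrite big_nat_recr //=; apply: cvgD => //; apply: cvgM => //; apply: cvg_cst.
Qed.

(* For each K, liminf a_n >= sum_(k < K) u_k p_k and
   limsup a_n <= 1 - sum_(k < K) w_k p_k, and both bounds tend to A. *)
Lemma cvg_lower_sums_sandwich (R : realType) (a : nat -> R) (x : nat -> nat -> R)
    (p u w : nat -> R) (A : R) :
  (forall k, (fun n => x n k) @ \oo --> p k) ->
  (forall n K, \sum_(0 <= k < K) u k * x n k <= a n) ->
  (forall n K, \sum_(0 <= k < K) w k * x n k <= 1 - a n) ->
  (fun K => \sum_(0 <= k < K) u k * p k) @ \oo --> A ->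
  (fun K => \sum_(0 <= k < K) w k * p k) @ \oo --> 1 - A ->
  a @ \oo --> A.
Proof.
move=> x_cvg u_le w_le u_cvg w_cvg; apply/cvgrPdist_le => e e0.
have e4 : 0 < e / 4 by rewrite divr_gt0.
have [K [uK wK]] : exists K, `|A - \sum_(0 <= k < K) u k * p k| <= e / 4 /\
    `|1 - A - \sum_(0 <= k < K) w k * p k| <= e / 4.
  move/cvgrPdist_le: u_cvg => /(_ _ e4) [N1 _ N1P].
  move/cvgrPdist_le: w_cvg => /(_ _ e4) [N2 _ N2P].
  by exists (maxn N1 N2); split; [apply: N1P | apply: N2P]; rewrite /= leq_max leqnn ?orbT.
move/cvgrPdist_le: (cvg_sum_coef (y := u) (K := K) x_cvg) => /(_ _ e4) [N1 _ N1P].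
move/cvgrPdist_le: (cvg_sum_coef (y := w) (K := K) x_cvg) => /(_ _ e4) [N2 _ N2P].
exists (maxn N1 N2) => // n /= le_n.
move: (N1P n (leq_trans (leq_maxl _ _) le_n)) (N2P n (leq_trans (leq_maxr _ _) le_n)).
move: (u_le n K) (w_le n K) uK wK; rewrite !ler_norml.
move=> ? ? /andP[? ?] /andP[? ?] /andP[? ?] /andP[? ?]; apply/andP; split; lra.
Qed.

Section RintegralSum.
Variables (R : realType) (d : measure_display) (T : measurableType d) (mu : measure T R)
  (D : set T) (mD : measurable D).

Lemma integral_EFin_Rintegral (f : T -> R) : mu.-integrable D (EFin \o f) ->
  (\int[mu]_(x in D) (f x)%:E)%E = (\int[mu]_(x in D) f x)%:E.
Proof. by move=> f_int; rewrite /Rintegral fineK // integrable_fin_num. Qed.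

Lemma integrable_Rsum (f : nat -> T -> R) K :
  (forall k, mu.-integrable D (EFin \o f k)) ->
  mu.-integrable D (EFin \o fun x => \sum_(0 <= k < K) f k x).
Proof.
move=> f_int.
have := @integrable_sum _ _ _ mu D mD _ (index_iota 0 K) xpredT
  (fun k x => (f k x)%:E) (fun k _ => f_int k).
by apply: eq_integrable => // x _; rewrite /= sumEFin.
Qed.

Lemma Rintegral_sum (f : nat -> T -> R) K :
  (forall k, mu.-integrable D (EFin \o f k)) ->
  \int[mu]_(x in D) (\sum_(0 <= k < K) f k x) = \sum_(0 <= k < K) \int[mu]_(x in D) f k x.
Proof.
move=> f_int; rewrite {1}/Rintegral.
under eq_integral do rewrite -sumEFin.
rewrite integral_sum //.
by under eq_bigr do rewrite integral_EFin_Rintegral //; rewrite sumEFin.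
Qed.

End RintegralSum.

Definition giso_invariant (R : realType) (phi : graph -> R) :=
  forall G G', finite_set (gV G) -> giso G G' -> phi G = phi G'.

Section RandomFiniteGraph.
Variables (R : realType) (d : measure_display) (Om : measurableType d)
  (P : probability Om R) (Gw : Om -> graph).
Hypothesis Gw_random : random_finite_graph directed_graph Gw.

Lemma random_finite_graph_finite w : finite_set (gV (Gw w)).
Proof. by case: Gw_random => /(_ w) []. Qed.

(* The event {phi (Gw w) in Y} is the countable union, over the codes k with
   phi (code_graph k) in Y, of the events {Gw w ~= code_graph k}. *)
Lemma measurable_invariant (phi : graph -> R) : giso_invariant phi ->
  measurable_fun setT (phi \o Gw).
Proof.
case: Gw_random => Gw_fin Gw_meas phi_inv _ Y mY; rewrite setTI.
have -> : (phi \o Gw) @^-1` Y =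
    \bigcup_(k in [set k | Y (phi (code_graph k))]) [set w | giso (Gw w) (code_graph k)].
  apply/seteqP; split => w /=.
    have [_ finG [v Vv]] := Gw_fin w; have [k [f [iso_f _]]] := code_surj (gE (Gw w)) finG Vv.
    have isoGk : giso (Gw w) (code_graph k) by exists f.
    by move=> Yw; exists k => //=; rewrite -(phi_inv _ _ finG isoGk).
  by case=> k /= Yk isoGk; rewrite (phi_inv _ _ (random_finite_graph_finite w) isoGk).
apply: bigcup_measurable => k _; apply: Gw_meas; by case: (code_graph_rooted k).
Qed.

Lemma integrable_invariant (phi : graph -> R) : giso_invariant phi ->
  (forall G, finite_set (gV G) -> 0 <= phi G <= 1) -> P.-integrable setT (EFin \o (phi \o Gw)).
Proof.
move=> phi_inv phi01; apply: measurable_bounded_integrable => //.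
- by apply: le_lt_trans (probability_le1 P measurableT) _; apply: ltry.
- exact: measurable_invariant.
- rewrite /bounded_near; near=> M => w _ /=.
  have /andP[phi_ge0 phi_le1] := phi01 _ (random_finite_graph_finite w).
  rewrite ger0_norm //; apply: le_trans phi_le1 _.
  by near: M; apply: nbhs_pinfty_ge; apply: num_real.
Unshelve. all: by end_near.
Qed.

Variables (r : nat) (H : graph) (h : nat).

Lemma integrable_type_frac k : P.-integrable setT (EFin \o fun w => type_frac R r (Gw w) k).
Proof.
apply: (integrable_invariant (phi := fun G => type_frac R r G k)); last by move=> G; apply: frac01.
by move=> G G' finG isoGG'; apply: frac_giso.
Qed.

Lemma integrable_frac_bip : P.-integrable setT (EFin \o fun w => Defs.frac R (bip (Gw w)) r H h).
Proof.
apply: (integrable_invariant (phi := fun G => Defs.frac R (bip G) r H h)).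
  by move=> G G' finG isoGG'; apply/frac_giso/giso_bip => //; apply: finite_bip.
by move=> G finG; apply/frac01/finite_bip.
Qed.

Lemma integrable_scaled_type_frac (c : R) k :
  P.-integrable setT (EFin \o fun w => c * type_frac R r (Gw w) k).
Proof.
have := integrableZl measurableT c (integrable_type_frac k).
by apply: eq_integrable => // w _; rewrite /= EFinM.
Qed.

Lemma integrable_sum_type_frac (y : nat -> R) K :
  P.-integrable setT (EFin \o fun w => \sum_(0 <= k < K) y k * type_frac R r (Gw w) k).
Proof. by apply: integrable_Rsum => // k; apply: integrable_scaled_type_frac. Qed.

Lemma Rintegral_sum_type_frac (y : nat -> R) K :
  \int[P]_(w in setT) (\sum_(0 <= k < K) y k * type_frac R r (Gw w) k) =
  \sum_(0 <= k < K) y k * \int[P]_(w in setT) type_frac R r (Gw w) k.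
Proof.
rewrite Rintegral_sum // => [|k]; last exact: integrable_scaled_type_frac.
by apply: eq_bigr => k _; rewrite RintegralZl // integrable_type_frac.
Qed.

Lemma sum_hit_coef_Rintegral_le K :
  \sum_(0 <= k < K) hit_coef R r H h k * \int[P]_(w in setT) type_frac R r (Gw w) k <=
  \int[P]_(w in setT) Defs.frac R (bip (Gw w)) r H h.
Proof.
rewrite -Rintegral_sum_type_frac; apply: le_Rintegral => //.
- exact: integrable_sum_type_frac.
- exact: integrable_frac_bip.
- by move=> w _; apply/sum_hit_coef_le/random_finite_graph_finite.
Qed.

Lemma sum_miss_coef_Rintegral_le K :
  \sum_(0 <= k < K) miss_coef R r H h k * \int[P]_(w in setT) type_frac R r (Gw w) k <=
  1 - \int[P]_(w in setT) Defs.frac R (bip (Gw w)) r H h.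
Proof.
have int1 : P.-integrable setT (EFin \o fun=> 1) by apply: finite_measure_integrable_cst.
have Rint1 : \int[P]_(w in setT) (1 : R) = 1.
  by rewrite Rintegral_cst // mul1r (congr1 fine (probability_setT P)).
rewrite -Rintegral_sum_type_frac -{1}Rint1 -RintegralB //; last exact: integrable_frac_bip.
apply: le_Rintegral => //; first exact: integrable_sum_type_frac.
  have := integrableB measurableT int1 integrable_frac_bip.
  by apply: eq_integrable => // w _; rewrite /= EFinB.
by move=> w _; apply/sum_miss_coef_le/random_finite_graph_finite.
Qed.

Lemma fprob_type_frac k :
  fprob P Gw r (code_graph k) (code_root k) = (\int[P]_(w in setT) type_frac R r (Gw w) k)%:E.
Proof. exact: (integral_EFin_Rintegral measurableT (integrable_type_frac k)). Qed.

Lemma fprob_bip :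
  fprob P (fun w => bip (Gw w)) r H h = (\int[P]_(w in setT) Defs.frac R (bip (Gw w)) r H h)%:E.
Proof. exact: (integral_EFin_Rintegral measurableT integrable_frac_bip). Qed.

End RandomFiniteGraph.

Lemma probability_fineK (R : realType) d (Om : measurableType d) (P : probability Om R) A :
  measurable A -> (fine (P A))%:E = P A.
Proof. by move=> mA; rewrite fineK // fin_num_measure. Qed.

Section RandomRootedGraph.
Variables (R : realType) (d : measure_display) (Om : measurableType d)
  (P : probability Om R) (G : Om -> graph) (o : Om -> nat).
Hypothesis Go_random : random_rooted_graph directed_graph G o.
Variable r : nat.

Definition type_event k := [set w | ball_iso (G w) (o w) r (code_graph k) (code_root k)].
Definition type_prob k := fine (P (type_event k)).

Lemma measurable_type_event k : measurable (type_event k).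
Proof. by case: Go_random => _; apply. Qed.

Lemma random_root_gV w : gV (G w) (o w).
Proof. by case: Go_random => /(_ w) []. Qed.

Lemma random_root_ball_finite w : finite_set (ballV (G w) (o w) r).
Proof. by case: Go_random => /(_ w) [_ lfG _ _] _; apply: ballV_finite. Qed.

Lemma random_root_canonical w : exists k, canonical_code k /\ type_event k w.
Proof. exact: canonical_ball_exists (random_root_gV w) (random_root_ball_finite w). Qed.

Lemma type_event_ifE (Q : Prop) k :
  [set w | Q /\ type_event k w] = if `[< Q >] then type_event k else set0.
Proof. by case: asboolP => q; apply/seteqP; split => w //= [] //. Qed.

Lemma measurable_type_event_if (Q : Prop) k : measurable [set w | Q /\ type_event k w].
Proof. by rewrite type_event_ifE; case: ifP => _; [apply: measurable_type_event |]. Qed.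

Lemma probability_type_event_if (Q : Prop) k :
  P [set w | Q /\ type_event k w] = (ind R Q * type_prob k)%:E.
Proof.
rewrite type_event_ifE /ind; case: asboolP => _; last by rewrite mul0r measure0.
by rewrite mul1r probability_fineK //; apply: measurable_type_event.
Qed.

Lemma cvg_sum_type_prob (Q : nat -> Prop) (B : set Om) :
  (forall k, Q k -> canonical_code k) -> B = \bigcup_k [set w | Q k /\ type_event k w] ->
  (fun K => \sum_(0 <= k < K) ind R (Q k) * type_prob k) @ \oo --> fine (P B).
Proof.
move=> Q_canonical ->; set F := fun k => [set w | Q k /\ type_event k w].
have mF k : measurable (F k) := measurable_type_event_if (Q k) k.
have disjF : trivIset setT F.
  move=> i j _ _ [w [[Qi Ei] [Qj Ej]]].
  exact: canonical_ball_uniq (random_root_gV w) (Q_canonical _ Qi) (Q_canonical _ Qj) Ei Ej.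
suff /fine_cvg : (fun K => (\sum_(0 <= k < K) ind R (Q k) * type_prob k)%:E) @ \oo -->
    (fine (P (\bigcup_k F k)))%:E by [].
rewrite probability_fineK; last exact: bigcup_measurable.
have -> : (fun K => (\sum_(0 <= k < K) ind R (Q k) * type_prob k)%:E) =
    (fun K => \sum_(0 <= k < K) P (F k)).
  apply: funext => K; rewrite -sumEFin; apply: eq_bigr => k _.
  by rewrite /F probability_type_event_if.
exact: measure_sigma_additive.
Qed.

Lemma cvg_sum_canonical_type_prob :
  (fun K => \sum_(0 <= k < K) ind R (canonical_code k) * type_prob k) @ \oo --> (1 : R).
Proof.
rewrite -[X in _ --> X](congr1 fine (probability_setT P)); apply: cvg_sum_type_prob => //.
apply/seteqP; split => w // _.
by have [k [ck Bk]] := random_root_canonical w; exists k.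
Qed.

Variables (H : graph) (h : nat).

Lemma bip_event_cover (b : bool) :
  [set w | ball_iso (bip (G w)) (b + (o w).*2) r H h] =
  \bigcup_k [set w | (canonical_code k /\
     ball_iso (bip (code_graph k)) (b + (code_root k).*2) r H h) /\ type_event k w].
Proof.
apply/seteqP; split => w /=.
  move=> Bw; have [k [ck Bk]] := random_root_canonical w.
  by exists k => //; do !split => //; apply/(bip_ball_iso b (random_root_gV w) Bk).
by case=> k _ [[ck Bk'] Bk]; apply/(bip_ball_iso b (random_root_gV w) Bk).
Qed.

Lemma cvg_sum_bip_event (b : bool) :
  (fun K => \sum_(0 <= k < K) ind R (canonical_code k /\
     ball_iso (bip (code_graph k)) (b + (code_root k).*2) r H h) * type_prob k) @ \oo -->
  fine (P [set w | ball_iso (bip (G w)) (b + (o w).*2) r H h]).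
Proof. by apply: cvg_sum_type_prob (bip_event_cover b) => k []. Qed.

Lemma measurable_bip_event (b : bool) :
  measurable [set w | ball_iso (bip (G w)) (b + (o w).*2) r H h].
Proof.
by rewrite bip_event_cover; apply: bigcup_measurable => k _; apply: measurable_type_event_if.
Qed.

Lemma bprob_fineK : (fine (bprob P G o r H h))%:E = bprob P G o r H h.
Proof.
rewrite /bprob /rprob -(probability_fineK P (measurable_bip_event false)).
by rewrite -(probability_fineK P (measurable_bip_event true)).
Qed.

Lemma cvg_sum_hit_coef :
  (fun K => \sum_(0 <= k < K) hit_coef R r H h k * type_prob k) @ \oo --> fine (bprob P G o r H h).
Proof.
rewrite /bprob /rprob -(probability_fineK P (measurable_bip_event false)).
rewrite -(probability_fineK P (measurable_bip_event true)) /=.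
have -> : (fun K => \sum_(0 <= k < K) hit_coef R r H h k * type_prob k) =
  (fun K => 2^-1 * (\sum_(0 <= k < K) ind R (canonical_code k /\
      ball_iso (bip (code_graph k)) (false + (code_root k).*2) r H h) * type_prob k +
    \sum_(0 <= k < K) ind R (canonical_code k /\
      ball_iso (bip (code_graph k)) (true + (code_root k).*2) r H h) * type_prob k)).
  apply: funext => K; rewrite -big_split mulr_sumr /=; apply: eq_bigr => k _.
  by rewrite /hit_coef /code_avg /bip_root_avg !ind_and; ring.
by apply: cvgMr; apply: cvgD; apply: cvg_sum_bip_event.
Qed.

Lemma cvg_sum_miss_coef :
  (fun K => \sum_(0 <= k < K) miss_coef R r H h k * type_prob k) @ \oo -->
  1 - fine (bprob P G o r H h).
Proof.
have -> : (fun K => \sum_(0 <= k < K) miss_coef R r H h k * type_prob k) =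
  (fun K => \sum_(0 <= k < K) ind R (canonical_code k) * type_prob k -
            \sum_(0 <= k < K) hit_coef R r H h k * type_prob k).
  by apply: funext => K; rewrite -sumrB; apply: eq_bigr => k _; rewrite /miss_coef /hit_coef; ring.
exact: cvgB cvg_sum_canonical_type_prob cvg_sum_hit_coef.
Qed.

End RandomRootedGraph.

Theorem lwc_bip (R : realType) (dn : nat -> measure_display)
    (Omn : forall n, measurableType (dn n)) (Pn : forall n, probability (Omn n) R)
    (Gn : forall n, Omn n -> graph) (d : measure_display) (Om : measurableType d)
    (P : probability Om R) (G : Om -> graph) (o : Om -> nat) :
  (forall n, random_finite_graph directed_graph (Gn n)) ->
  random_rooted_graph directed_graph G o ->
  lwc directed_graph (fun n => fprob (Pn n) (Gn n)) (rprob P G o) ->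
  lwc undirected_graph (fun n => fprob (Pn n) (fun w => bip (Gn n w))) (bprob P G o).
Proof.
move=> Gn_random Go_random Gn_lwc r H h _.
rewrite -(bprob_fineK P Go_random r H h).
under eq_fun do rewrite fprob_bip //.
apply/fine_cvgP; split; first exact: nearW.
apply: (cvg_lower_sums_sandwich
  (x := fun n k => \int[Pn n]_(w in setT) type_frac R r (Gn n w) k) (p := type_prob P G o r)).
- move=> k; have := Gn_lwc r _ _ (code_graph_rooted k).
  under eq_fun do rewrite fprob_type_frac //.
  rewrite /rprob -probability_fineK; first by move/fine_cvg.
  exact: measurable_type_event Go_random r k.
- by move=> n K; apply: sum_hit_coef_Rintegral_le.
- by move=> n K; apply: sum_miss_coef_Rintegral_le.
- exact: cvg_sum_hit_coef.
- exact: cvg_sum_miss_coef.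
Qed.

(** * The converse fails *)

Section Examples.
Variable R : realType.

Lemma frac_loop_graph r H h :
  Defs.frac R loop_graph r H h = ind R (ball_iso loop_graph 0 r H h).
Proof. by rewrite (@frac_seq R loop_graph r H h [:: 0%N]) // big_seq1 divr1. Qed.

Lemma frac_digon r H h : Defs.frac R digon r H h = ind R (ball_iso digon 0 r H h).
Proof.
rewrite (@frac_seq R digon r H h [:: 0%N; 1%N]) // big_cons big_seq1.
by rewrite (ind_iff _ (digon_ball_iso10 r H h)) /=; lra.
Qed.

Lemma frac_bip_loop_graph r H h :
  Defs.frac R (bip loop_graph) r H h = ind R (ball_iso (bip loop_graph) 0 r H h).
Proof.
have Vs v : gV (bip loop_graph) v <-> v \in [:: 0%N; 1%N].
  by split => [/gV_bip_loop_graph|]; case: v => [|[|v]].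
rewrite (frac_seq _ _ _ _ _ Vs) // big_cons big_seq1.
by rewrite (ind_iff _ (bip_loop_graph_ball_iso10 r H h)) /=; lra.
Qed.

Lemma frac_bip_digon r H h :
  Defs.frac R (bip digon) r H h = ind R (ball_iso (bip loop_graph) 0 r H h).
Proof.
have Vs v : gV (bip digon) v <-> v \in [:: 0%N; 1%N; 2%N; 3%N].
  by split => [/gV_bip_digon|]; case: v => [|[|[|[|v]]]].
rewrite (frac_seq _ _ _ _ _ Vs) // !big_cons big_nil.
have [iso0 iso3] := bip_digon_ball_iso03 r H h; have [iso2 iso1] := bip_digon_ball_iso21 r H h.
have iso10 := bip_loop_graph_ball_iso10 r H h.
rewrite (ind_iff _ iso0) (ind_iff _ iso2) (ind_iff _ (iff_trans iso1 iso10)).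
by rewrite (ind_iff _ (iff_trans iso3 iso10)) /=; lra.
Qed.

Lemma measurable_cst_event d (T : measurableType d) (Q : Prop) : measurable [set _ : T | Q].
Proof.
case: (pselect Q) => q; last by have -> : [set _ : T | Q] = set0 by apply/seteqP; split.
by have -> : [set _ : T | Q] = setT by apply/seteqP; split.
Qed.

Lemma random_finite_graph_cst d (T : measurableType d) (F : graph) :
  directed_graph F -> finite_graph F -> gV F !=set0 ->
  random_finite_graph directed_graph (fun _ : T => F).
Proof. by move=> dirF finF nzF; split => // F' _ _; apply: measurable_cst_event. Qed.

Lemma random_rooted_graph_cst (cls : graph -> Prop) d (T : measurableType d) (F : graph) o :
  cls F -> locally_finite F -> gV F o -> Defs.connected F o ->
  random_rooted_graph cls (fun _ : T => F) (fun _ => o).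
Proof. by move=> clsF lfF Vo connF; split => // r H h; apply: measurable_cst_event. Qed.

Lemma fprob_cst d (T : measurableType d) (P : probability T R) F r H h :
  fprob P (fun _ => F) r H h = (Defs.frac R F r H h)%:E.
Proof.
rewrite /fprob (integral_cst P measurableT).
by rewrite -[X in (_ * X)%E]/(P setT) probability_setT mule1.
Qed.

Lemma rprob_cst d (T : measurableType d) (P : probability T R) F o r H h :
  rprob P (fun _ => F) (fun _ => o) r H h = (ind R (ball_iso F o r H h))%:E.
Proof.
rewrite /rprob; case: (pselect (ball_iso F o r H h)) => q.
  have -> : [set _ : T | ball_iso F o r H h] = setT by apply/seteqP; split.
  by rewrite probability_setT indT.
have -> : [set _ : T | ball_iso F o r H h] = set0 by apply/seteqP; split.
by rewrite measure0 indF.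
Qed.

Lemma lwc_deterministic (cls : graph -> Prop) dn (Tn : forall n, measurableType (dn n))
    (Pn : forall n, probability (Tn n) R) (Fn : nat -> graph)
    d (T : measurableType d) (P : probability T R) F o :
  (forall n r H h, Defs.frac R (Fn n) r H h = ind R (ball_iso F o r H h)) ->
  lwc cls (fun n => fprob (Pn n) (fun _ => Fn n)) (rprob P (fun _ => F) (fun _ => o)).
Proof.
move=> Fn_frac r H h _; rewrite rprob_cst.
by under eq_fun do rewrite fprob_cst Fn_frac; apply: cvg_cst.
Qed.

Definition unit_prob : probability unit R := dirac tt.

Definition alternating (n : nat) : graph := if odd n then digon else loop_graph.

Lemma random_finite_loop_graph :
  random_finite_graph directed_graph (fun _ : unit => loop_graph).
Proof.
apply: random_finite_graph_cst; [exact: directed_loop_graph | exact: finite_loop_graph |].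
by exists 0%N.
Qed.

Lemma random_finite_digon : random_finite_graph directed_graph (fun _ : unit => digon).
Proof.
by apply: random_finite_graph_cst; [exact: directed_digon | exact: finite_digon | exists 0%N].
Qed.

Lemma random_finite_alternating n :
  random_finite_graph directed_graph (fun _ : unit => alternating n).
Proof.
rewrite /alternating; case: (odd n); first exact: random_finite_digon.
exact: random_finite_loop_graph.
Qed.

Lemma lwc_bip_alternating :
  lwc undirected_graph (fun n => fprob unit_prob (fun _ => bip (alternating n)))
    (rprob unit_prob (fun _ => bip loop_graph) (fun _ => 0%N)).
Proof.
apply: lwc_deterministic => n r H h; rewrite /alternating.
by case: (odd n); [apply: frac_bip_digon | apply: frac_bip_loop_graph].
Qed.

Lemma random_rooted_bip_loop_graph :
  random_rooted_graph undirected_graph (fun _ : unit => bip loop_graph) (fun _ => 0%N).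
Proof.
apply: random_rooted_graph_cst => //; last exact: connected_bip_loop_graph.
  by split; [apply/wf_bip/directed_loop_graph | apply: symmetric_bip].
apply: locally_finite_finite; first exact/wf_bip/directed_loop_graph.
exact/finite_bip/finite_loop_graph.
Qed.

Lemma finite_rooted_loop_graph : finite_rooted directed_graph loop_graph 0.
Proof. by split; [exact: directed_loop_graph | exact: finite_loop_graph |]. Qed.

(* The frequency of vertices carrying a loop alternates 1, 0, 1, 0, ... *)
Lemma not_lwc_alternating :
  ~ exists d (Om : measurableType d) (P : probability Om R) (G : Om -> graph) (o : Om -> nat),
      random_rooted_graph directed_graph G o /\
      lwc directed_graph (fun n => fprob unit_prob (fun _ => alternating n)) (rprob P G o).
Proof.
case=> d [Om [P [G [root [Go_random Gn_lwc]]]]].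
have := Gn_lwc 0%N loop_graph 0%N finite_rooted_loop_graph.
have alt_frac n : fprob unit_prob (fun _ => alternating n) 0 loop_graph 0 =
    (if odd n then 0 else 1)%:E.
  rewrite fprob_cst /alternating; case: (odd n).
    by rewrite frac_digon indF //; apply: digon_not_ball0.
  by rewrite frac_loop_graph indT //; apply: loop_graph_ball0.
under eq_fun do rewrite alt_frac.
rewrite /rprob -probability_fineK; last by case: Go_random => _; apply.
have e0 : (0 : R) < 1 / 4 by lra.
move=> /fine_cvg /cvgrPdist_le /(_ _ e0) [N _ NP].
have leN : (N <= N.*2)%N by lia.
move: (NP _ leN) (NP _ (leqW leN)); rewrite /= odd_double /=.
by set l := fine _; rewrite subr0 !ler_norml => /andP[? ?] /andP[? ?]; lra.
Qed.

Lemma random_rooted_loop_graph :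
  random_rooted_graph directed_graph (fun _ : unit => loop_graph) (fun _ => 0%N).
Proof.
apply: random_rooted_graph_cst => //; [exact: directed_loop_graph | | exact: connected_loop_graph].
exact: locally_finite_finite directed_loop_graph finite_loop_graph.
Qed.

Lemma random_rooted_digon :
  random_rooted_graph directed_graph (fun _ : unit => digon) (fun _ => 0%N).
Proof.
apply: random_rooted_graph_cst => //; [exact: directed_digon | | exact: connected_digon].
exact: locally_finite_finite directed_digon finite_digon.
Qed.

Lemma rprob_loop_graph_neq_digon :
  rprob unit_prob (fun _ => loop_graph) (fun _ => 0%N) 0 loop_graph 0 <>
  rprob unit_prob (fun _ => digon) (fun _ => 0%N) 0 loop_graph 0.
Proof.
rewrite !rprob_cst (indT _ loop_graph_ball0) (indF _ digon_not_ball0).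
by case=> /eqP; rewrite oner_eq0.
Qed.

Lemma bprob_loop_graph_digon r H h :
  bprob unit_prob (fun _ => loop_graph) (fun _ => 0%N) r H h =
  bprob unit_prob (fun _ => digon) (fun _ => 0%N) r H h.
Proof.
rewrite /bprob !rprob_cst /vminus /vplus /=.
have [iso0 _] := bip_digon_ball_iso03 r H h; have [_ iso1] := bip_digon_ball_iso21 r H h.
by rewrite (ind_iff _ iso0) (ind_iff _ iso1).
Qed.

End Examples.

Theorem proposition1p1 (R : realType) :
  (* (1) local weak convergence of G_n implies that of the bipartite
         representations, to (G', o') with o' = o^- or o^+ w.p. 1/2 each *)
  (forall (dn : nat -> measure_display) (Omn : forall n, measurableType (dn n))
          (Pn : forall n, probability (Omn n) R) (Gn : forall n, Omn n -> graph)
          (d : measure_display) (Om : measurableType d) (P : probability Om R)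
          (G : Om -> graph) (o : Om -> nat),
      (forall n, random_finite_graph directed_graph (Gn n)) ->
      random_rooted_graph directed_graph G o ->
      lwc directed_graph (fun n => fprob (Pn n) (Gn n)) (rprob P G o) ->
      lwc undirected_graph (fun n => fprob (Pn n) (fun w => bip (Gn n w)))
          (bprob P G o)) /\
  (* (2) the converse does not hold *)
  (exists (dn : nat -> measure_display) (Omn : forall n, measurableType (dn n))
          (Pn : forall n, probability (Omn n) R) (Gn : forall n, Omn n -> graph),
      (forall n, random_finite_graph directed_graph (Gn n)) /\
      (exists (d : measure_display) (Om : measurableType d) (P : probability Om R)
              (G' : Om -> graph) (o' : Om -> nat),
          random_rooted_graph undirected_graph G' o' /\
          lwc undirected_graph (fun n => fprob (Pn n) (fun w => bip (Gn n w)))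
              (rprob P G' o')) /\
      ~ (exists (d : measure_display) (Om : measurableType d) (P : probability Om R)
                (G : Om -> graph) (o : Om -> nat),
            random_rooted_graph directed_graph G o /\
            lwc directed_graph (fun n => fprob (Pn n) (Gn n)) (rprob P G o))) /\
  (* (3) two different local weak limits with isomorphic bipartite representations *)
  (exists (d1 : measure_display) (Om1 : measurableType d1) (P1 : probability Om1 R)
          (G1 : Om1 -> graph) (o1 : Om1 -> nat)
          (d2 : measure_display) (Om2 : measurableType d2) (P2 : probability Om2 R)
          (G2 : Om2 -> graph) (o2 : Om2 -> nat),
      random_rooted_graph directed_graph G1 o1 /\
      random_rooted_graph directed_graph G2 o2 /\
      (exists (dn : nat -> measure_display) (Omn : forall n, measurableType (dn n))
              (Pn : forall n, probability (Omn n) R) (Gn : forall n, Omn n -> graph),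
          (forall n, random_finite_graph directed_graph (Gn n)) /\
          lwc directed_graph (fun n => fprob (Pn n) (Gn n)) (rprob P1 G1 o1)) /\
      (exists (dn : nat -> measure_display) (Omn : forall n, measurableType (dn n))
              (Pn : forall n, probability (Omn n) R) (Gn : forall n, Omn n -> graph),
          (forall n, random_finite_graph directed_graph (Gn n)) /\
          lwc directed_graph (fun n => fprob (Pn n) (Gn n)) (rprob P2 G2 o2)) /\
      (exists r H h, finite_rooted directed_graph H h /\
          rprob P1 G1 o1 r H h <> rprob P2 G2 o2 r H h) /\
      (forall r H h, bprob P1 G1 o1 r H h = bprob P2 G2 o2 r H h)).
Proof.
split; first by move=> *; apply: lwc_bip.
split.
  exists (fun=> _), (fun=> unit), (fun=> unit_prob R), (fun n _ => alternating n).
  split; first exact: random_finite_alternating.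
  split; last exact: not_lwc_alternating.
  exists _, unit, (unit_prob R), (fun _ => bip loop_graph), (fun _ => 0%N).
  by split; [exact: random_rooted_bip_loop_graph | exact: lwc_bip_alternating].
exists _, unit, (unit_prob R), (fun _ => loop_graph), (fun _ => 0%N).
exists _, unit, (unit_prob R), (fun _ => digon), (fun _ => 0%N).
split; first exact: random_rooted_loop_graph.
split; first exact: random_rooted_digon.
split.
  exists (fun=> _), (fun=> unit), (fun=> unit_prob R), (fun _ _ => loop_graph).
  split; first by move=> _; exact: random_finite_loop_graph.
  by apply: lwc_deterministic => n r H h; apply: frac_loop_graph.
split.
  exists (fun=> _), (fun=> unit), (fun=> unit_prob R), (fun _ _ => digon).
  split; first by move=> _; exact: random_finite_digon.
  by apply: lwc_deterministic => n r H h; apply: frac_digon.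
split; first by exists 0%N, loop_graph, 0%N; split; [exact: finite_rooted_loop_graph |
  exact: rprob_loop_graph_neq_digon].
exact: bprob_loop_graph_digon.
Qed.
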